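(* Let $A_1A_2A_3$ be a gyrotriangle possessing a circumgyrocircle in the Einstein gyrovector space $\mathbb{R}^n_s$, $n\ge2$, $\gamma_{ij}=\gamma_{\ominus A_i\oplus A_j}$. For a parameter $0\le t_1\le1$ let $$P=\frac{(1-t_1)\gamma_{A_1}A_1+t_1\gamma_{A_2}A_2}{(1-t_1)\gamma_{A_1}+t_1\gamma_{A_2}}$$ (a point of the gyrosegment $A_1A_2$), and let $Q$ be the foot of the corresponding circumgyrocevian, i.e. the point other than $A_3$ where the gyroray from $A_3$ through $P$ meets the circumgyrocircle. Then $Q=\frac{m_1\gamma_{A_1}A_1+m_2\gamma_{A_2}A_2+m_3\gamma_{A_3}A_3}{m_1\gamma_{A_1}+m_2\gamma_{A_2}+m_3\gamma_{A_3}}$ with $m_1=\{\gamma_{13}-1+(\gamma_{23}-\gamma_{13})t_1\}(1-t_1)$, $m_2=\{\gamma_{13}-1+(\gamma_{23}-\gamma_{13})t_1\}t_1$, $m_3=-(\gamma_{12}-1)(1-t_1)t_1$.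
   Context: Fix $s>0$; $\mathbb{R}^n_s=\{v\in\mathbb{R}^n:\|v\|<s\}$ with Einstein addition $u\oplus v=\frac{1}{1+u\cdot v/s^2}\{u+\frac{1}{\gamma_u}v+\frac{1}{s^2}\frac{\gamma_u}{1+\gamma_u}(u\cdot v)u\}$, $\gamma_v=(1-\|v\|^2/s^2)^{-1/2}$, $\ominus v=-v$; gyrodistance $\|\ominus X\oplus Y\|$. Gyrosegments/gyrorays are Euclidean segments/rays intersected with the ball. A gyrotriangle $A_1A_2A_3$ has $\ominus A_1\oplus A_2,\ominus A_1\oplus A_3$ linearly independent; its circumgyrocircle is the set of points of the gyroplane $(A_1\oplus\mathrm{span}\{\ominus A_1\oplus A_2,\ominus A_1\oplus A_3\})\cap\mathbb{R}^n_s$ at gyrodistance $R$ from the point $O$ of that gyroplane equigyrodistant (distance $R$) from the vertices. Gyrobarycentric coordinates are homogeneous. *)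

From mathcomp Require Import all_boot all_order all_algebra.
Set Implicit Arguments. Unset Strict Implicit. Unset Printing Implicit Defensive.
Import Order.TTheory GRing.Theory Num.Theory.
Local Open Scope ring_scope.

Section Einstein.
Variables (R : rcfType) (n : nat) (s : R).
Implicit Types u v w X Y : 'rV[R]_n.

Definition dotv u v : R := \sum_(i < n) u 0 i * v 0 i.
Definition normv v : R := Num.sqrt (dotv v v).

Definition in_ball v : Prop := normv v < s.

Definition gamma v : R := (Num.sqrt (1 - dotv v v / s ^+ 2))^-1.

Definition eadd u v : 'rV[R]_n :=
  (1 + dotv u v / s ^+ 2)^-1 *:
    (u + (gamma u)^-1 *: v + ((s ^+ 2)^-1 * (gamma u / (1 + gamma u)) * dotv u v) *: u).

Definition gyrodist X Y : R := normv (eadd (- X) Y).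

Definition lin_indep2 u v : Prop :=
  forall a b : R, a *: u + b *: v = 0 -> a = 0 /\ b = 0.

Definition gyrotriangle A1 A2 A3 : Prop :=
  [/\ in_ball A1, in_ball A2, in_ball A3 &
      lin_indep2 (eadd (- A1) A2) (eadd (- A1) A3)].

Definition in_gyroplane A1 A2 A3 X : Prop :=
  in_ball X /\
  exists a b : R, let w := a *: eadd (- A1) A2 + b *: eadd (- A1) A3 in
                  in_ball w /\ X = eadd A1 w.

Definition circumcenter A1 A2 A3 O (R0 : R) : Prop :=
  [/\ in_gyroplane A1 A2 A3 O, gyrodist O A1 = R0, gyrodist O A2 = R0 &
      gyrodist O A3 = R0].

Definition on_circumgyrocircle A1 A2 A3 O (R0 : R) X : Prop :=
  in_gyroplane A1 A2 A3 X /\ gyrodist O X = R0.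

(* gyroray from A through B: Euclidean ray intersected with the ball *)
Definition on_gyroray A B X : Prop :=
  in_ball X /\ exists l : R, 0 <= l /\ X = A + l *: (B - A).

Definition gyrobary3 A1 A2 A3 (m1 m2 m3 : R) : 'rV[R]_n :=
  (m1 * gamma A1 + m2 * gamma A2 + m3 * gamma A3)^-1 *:
    ((m1 * gamma A1) *: A1 + (m2 * gamma A2) *: A2 + (m3 * gamma A3) *: A3).

End Einstein.

From mathcomp Require Import all_boot all_order all_algebra.
From mathcomp Require Import ring lra.
Import Order.TTheory GRing.Theory Num.Theory.
Local Open Scope ring_scope.
Set Implicit Arguments. Unset Strict Implicit. Unset Printing Implicit Defensive.

(* With mink u v = 1 - u.v / s^2 (the Minkowski product of the lifts (u, 1), (v, 1)) one has
   gamma_v^2 mink v v = 1 and gamma_{(-u)(+)v} = gamma_u gamma_v mink u v.  A point Q with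
   normalized gyrobarycentric coordinates m_i is the affine combination of the A_i with weights
   m_i gamma_{A_i}, so mink is affine in Q.  Equal gyrodistance from O means that
   gamma_X mink X O takes the same value at X = A_1, A_2, A_3, Q, whence
   gamma_Q (m_1 + m_2 + m_3) = 1; with gamma_Q^2 mink Q Q = 1 this gives the circumgyrocircle
   equation m_1 m_2 (gamma_12 - 1) + m_1 m_3 (gamma_13 - 1) + m_2 m_3 (gamma_23 - 1) = 0.
   On the gyroray from A_3 through P the coordinates are (a (1 - t_1), a t_1, b) with a <> 0
   away from A_3, and the equation becomes linear in (a : b).  Its solution is non-degenerate
   because gamma_13, gamma_23 > 1 in a gyrotriangle. *)

Section Dot.
Variables (R : rcfType) (n : nat).
Implicit Types u v w : 'rV[R]_n.

Lemma dotvC u v : dotv u v = dotv v u.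
Proof. by apply: eq_bigr => i _; rewrite mulrC. Qed.

Lemma dotvDl u v w : dotv (u + v) w = dotv u w + dotv v w.
Proof. by rewrite /dotv -big_split; apply: eq_bigr => i _; rewrite !mxE mulrDl. Qed.

Lemma dotvZl a u v : dotv (a *: u) v = a * dotv u v.
Proof. by rewrite /dotv mulr_sumr; apply: eq_bigr => i _; rewrite !mxE mulrA. Qed.

Lemma dotvDr u v w : dotv w (u + v) = dotv w u + dotv w v.
Proof. by rewrite dotvC dotvDl !(dotvC w). Qed.

Lemma dotvZr a u v : dotv v (a *: u) = a * dotv v u.
Proof. by rewrite dotvC dotvZl dotvC. Qed.

Lemma dotvNl u v : dotv (- u) v = - dotv u v.
Proof. by rewrite -scaleN1r dotvZl mulN1r. Qed.

Lemma dotvNr u v : dotv v (- u) = - dotv v u.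
Proof. by rewrite dotvC dotvNl dotvC. Qed.

Lemma dotvBl u v w : dotv (u - v) w = dotv u w - dotv v w.
Proof. by rewrite dotvDl dotvNl. Qed.

Lemma dotvBr u v w : dotv w (u - v) = dotv w u - dotv w v.
Proof. by rewrite dotvDr dotvNr. Qed.

Lemma dotvv_ge0 v : 0 <= dotv v v.
Proof. by apply: sumr_ge0 => i _; rewrite -expr2 sqr_ge0. Qed.

Lemma dotvv_eq0 v : dotv v v = 0 -> v = 0.
Proof.
move=> v0; apply/rowP => i; rewrite mxE.
have sq_ge0 (j : 'I_n) : xpredT j -> 0 <= v 0 j * v 0 j by rewrite -expr2 sqr_ge0.
by apply/eqP; have /eqP := psumr_eq0P sq_ge0 v0 (i := i) isT; rewrite mulf_eq0 orbb.
Qed.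

Lemma dotv_sqr_comb a b u v : dotv (a *: u + b *: v) (a *: u + b *: v) =
  a ^+ 2 * dotv u u + 2 * a * b * dotv u v + b ^+ 2 * dotv v v.
Proof. by rewrite !dotvDl !dotvDr !dotvZl !dotvZr (dotvC v u); ring. Qed.

End Dot.

Lemma convex_comb_gt0 (R : realFieldType) (t a b : R) :
  0 <= t <= 1 -> 0 < a -> 0 < b -> 0 < (1 - t) * a + t * b.
Proof.
case/andP=> t_ge0 t_le1 a_gt0 b_gt0; have [t_lt1|t_ge1] := ltrP t 1.
  have : 0 < (1 - t) * a by rewrite mulr_gt0 // subr_gt0.
  have : 0 <= t * b by rewrite mulr_ge0 // ltW.
  lra.
have -> : t = 1 by apply/eqP; rewrite eq_le t_le1 t_ge1.
by rewrite subrr mul0r add0r mul1r.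
Qed.

Lemma cevian_circle_coef (R : fieldType) (a b t g12 g13 g23 : R) : a != 0 ->
  a * (1 - t) * (a * t) * (g12 - 1) + a * (1 - t) * b * (g13 - 1) + a * t * b * (g23 - 1) = 0 ->
  b * (g13 - 1 + (g23 - g13) * t) = a * - ((g12 - 1) * (1 - t) * t).
Proof.
move=> a_neq0 circle; apply/eqP; rewrite -subr_eq0.
have /eqP : a * (b * (g13 - 1 + (g23 - g13) * t) - a * - ((g12 - 1) * (1 - t) * t)) = 0.
  by rewrite -[RHS]circle; ring.
by rewrite mulf_eq0 (negPf a_neq0).
Qed.

Section Einstein.
Variables (R : rcfType) (n : nat) (s : R).
Hypothesis s_gt0 : 0 < s.
Implicit Types u v w O X Y : 'rV[R]_n.

Definition mink u v : R := 1 - dotv u v / s ^+ 2.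

Lemma minkC u v : mink u v = mink v u.
Proof. by rewrite /mink dotvC. Qed.

Lemma ball_dotvv v : in_ball s v -> dotv v v < s ^+ 2.
Proof.
rewrite /in_ball /normv => lt_vs.
have := sqr_sqrtr (dotvv_ge0 v); have := sqrtr_ge0 (dotv v v); nra.
Qed.

Lemma mink_gt0 u v : dotv u u < s ^+ 2 -> dotv v v < s ^+ 2 -> 0 < mink u v.
Proof.
move=> ltu ltv; rewrite subr_gt0 ltr_pdivrMr ?exprn_gt0 // mul1r.
by have := dotvv_ge0 (u - v); rewrite !dotvBl !dotvBr (dotvC v u); nra.
Qed.

Lemma gamma_gt0 v : dotv v v < s ^+ 2 -> 0 < gamma s v.
Proof. by move=> ltv; rewrite invr_gt0 sqrtr_gt0 mink_gt0. Qed.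

Lemma gamma_sqr v : dotv v v < s ^+ 2 -> gamma s v ^+ 2 * mink v v = 1.
Proof.
move=> ltv; have mvv_gt0 := mink_gt0 ltv ltv.
by rewrite /gamma -/(mink v v) exprVn sqr_sqrtr ?ltW // mulVf // gt_eqF.
Qed.

Lemma gamma_uniq v g : 0 < g -> g ^+ 2 * mink v v = 1 -> gamma s v = g.
Proof.
move=> g_gt0 gvv; have g_neq0 : g != 0 by rewrite gt_eqF.
have mvv : mink v v = (g ^-1) ^+ 2.
  by apply: (mulfI (expf_neq0 2 g_neq0)); rewrite gvv -exprMn mulfV ?expr1n.
by rewrite /gamma -/(mink v v) mvv sqrtr_sqr ger0_norm ?invrK // invr_ge0 ltW.
Qed.

Lemma gamma_oppv v : gamma s (- v) = gamma s v.
Proof. by rewrite /gamma dotvNl dotvNr opprK. Qed.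

Lemma minkvv_gamma v : dotv v v < s ^+ 2 -> mink v v = (gamma s v ^+ 2)^-1.
Proof.
move=> ltv; have g2_neq0 : gamma s v ^+ 2 != 0 by rewrite expf_neq0 // gt_eqF // gamma_gt0.
by apply: (mulfI g2_neq0); rewrite gamma_sqr // mulfV.
Qed.

Lemma dotv_mink u v : dotv u v = s ^+ 2 * (1 - mink u v).
Proof. by rewrite /mink; field; rewrite gt_eqF. Qed.

Lemma eadd_oppl u v : dotv u u < s ^+ 2 -> eadd s (- u) v =
  (mink u v)^-1 *: ((gamma s u / (1 + gamma s u) * (1 - mink u v) - 1) *: u
                      + (gamma s u)^-1 *: v).
Proof.
move=> ltu; have g_gt0 := gamma_gt0 ltu.
rewrite /eadd gamma_oppv dotvNl /mink; congr (_ *: _); first by rewrite mulNr.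
by apply/rowP => i; rewrite !mxE; field; rewrite !gt_eqF ?addr_gt0.
Qed.

Lemma gamma_eadd_oppl u v : dotv u u < s ^+ 2 -> dotv v v < s ^+ 2 ->
  gamma s (eadd s (- u) v) = gamma s u * gamma s v * mink u v.
Proof.
move=> ltu ltv; have := minkvv_gamma ltu; have := minkvv_gamma ltv.
have := gamma_gt0 ltu; have := gamma_gt0 ltv; have := mink_gt0 ltu ltv.
set g := gamma s u; set d := gamma s v; set D := mink u v => D_gt0 d_gt0 g_gt0 mvv muu.
apply: gamma_uniq; first by rewrite !mulr_gt0.
rewrite eadd_oppl // /mink dotvZl dotvZr dotv_sqr_comb !dotv_mink.
rewrite -/D -/(mink u u) -/(mink v v) muu mvv -/g.
by field; rewrite subKr !gt_eqF // (addr_gt0 ltr01 g_gt0).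
Qed.

Lemma gamma_eq_gyrodist O X Y : gyrodist s O X = gyrodist s O Y ->
  gamma s (eadd s (- O) X) = gamma s (eadd s (- O) Y).
Proof.
rewrite /gyrodist /normv => eqXY.
by rewrite /gamma -(sqr_sqrtr (dotvv_ge0 (eadd s (- O) X))) eqXY sqr_sqrtr ?dotvv_ge0.
Qed.

(* A reverse Cauchy-Schwarz identity for the Minkowski product. *)
Lemma mink_sqr_sub u v : s ^+ 4 * (mink u v ^+ 2 - mink u u * mink v v) =
  (s ^+ 2 - dotv u u) * dotv (u - v) (u - v) + (dotv u u - dotv u v) ^+ 2.
Proof.
rewrite /mink !dotvBl !dotvBr (dotvC v u).
by field; rewrite gt_eqF.
Qed.

Lemma gamma_mink_sqr_sub u v : dotv u u < s ^+ 2 -> dotv v v < s ^+ 2 ->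
  (gamma s u * gamma s v * mink u v) ^+ 2 - 1 =
  (gamma s u * gamma s v / s ^+ 2) ^+ 2 *
  ((s ^+ 2 - dotv u u) * dotv (u - v) (u - v) + (dotv u u - dotv u v) ^+ 2).
Proof.
move=> ltu ltv; rewrite -mink_sqr_sub !minkvv_gamma //.
have := gamma_gt0 ltu; have := gamma_gt0 ltv => gv_gt0 gu_gt0.
by field; rewrite !gt_eqF.
Qed.

Lemma gamma_mink_ge1 u v : dotv u u < s ^+ 2 -> dotv v v < s ^+ 2 ->
  1 <= gamma s u * gamma s v * mink u v.
Proof.
move=> ltu ltv; have := gamma_mink_sqr_sub ltu ltv.
set x := gamma s u * gamma s v * mink u v => sqr_x.
have x_gt0 : 0 < x by rewrite !mulr_gt0 ?gamma_gt0 ?mink_gt0.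
have : 0 <= x ^+ 2 - 1.
  rewrite sqr_x mulr_ge0 ?sqr_ge0 // addr_ge0 ?sqr_ge0 // mulr_ge0 ?dotvv_ge0 //.
  by rewrite subr_ge0 ltW.
nra.
Qed.

Lemma gamma_mink_eq1 u v : dotv u u < s ^+ 2 -> dotv v v < s ^+ 2 ->
  gamma s u * gamma s v * mink u v = 1 -> u = v.
Proof.
move=> ltu ltv guv; apply/eqP; rewrite -subr_eq0; apply/eqP/dotvv_eq0.
have := gamma_mink_sqr_sub ltu ltv; rewrite guv expr1n subrr => /esym/eqP.
have P_gt0 : 0 < gamma s u * gamma s v / s ^+ 2.
  by rewrite !mulr_gt0 ?gamma_gt0 // invr_gt0 exprn_gt0.
rewrite mulf_eq0 expf_eq0 (gt_eqF P_gt0) andbF /= => /eqP.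
have := dotvv_ge0 (u - v); have := sqr_ge0 (dotv u u - dotv u v).
have : 0 < s ^+ 2 - dotv u u by rewrite subr_gt0.
nra.
Qed.

Lemma mink_combr X (A1 A2 A3 : 'rV[R]_n) (w1 w2 w3 : R) : w1 + w2 + w3 = 1 ->
  mink X (w1 *: A1 + w2 *: A2 + w3 *: A3) =
  w1 * mink X A1 + w2 * mink X A2 + w3 * mink X A3.
Proof.
move=> sum_w; rewrite /mink !dotvDr !dotvZr -{1}sum_w.
by field; rewrite gt_eqF.
Qed.

Lemma gamma_mink_center O X Y : dotv O O < s ^+ 2 -> dotv X X < s ^+ 2 -> dotv Y Y < s ^+ 2 ->
  gyrodist s O X = gyrodist s O Y -> gamma s X * mink X O = gamma s Y * mink Y O.
Proof.
move=> ltO ltX ltY /gamma_eq_gyrodist.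
rewrite !gamma_eadd_oppl // !(minkC O) -!mulrA => /mulfI; apply.
by rewrite gt_eqF // gamma_gt0.
Qed.

Lemma gyrobary3Z (A1 A2 A3 : 'rV[R]_n) (k m1 m2 m3 : R) : k != 0 ->
  gyrobary3 s A1 A2 A3 (k * m1) (k * m2) (k * m3) = gyrobary3 s A1 A2 A3 m1 m2 m3.
Proof.
move=> k_neq0; rewrite /gyrobary3 -!mulrA -!mulrDr -![(k * _) *: _]scalerA -!scalerDr.
by rewrite scalerA invfM mulrAC mulVf ?mul1r.
Qed.

Lemma gyrobary3_normalized (A1 A2 A3 : 'rV[R]_n) (m1 m2 m3 : R) :
  m1 * gamma s A1 + m2 * gamma s A2 + m3 * gamma s A3 = 1 ->
  gyrobary3 s A1 A2 A3 m1 m2 m3 =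
  (m1 * gamma s A1) *: A1 + (m2 * gamma s A2) *: A2 + (m3 * gamma s A3) *: A3.
Proof. by rewrite /gyrobary3 => ->; rewrite invr1 scale1r. Qed.

Lemma minkvv_gyrobary3 (A1 A2 A3 : 'rV[R]_n) (m1 m2 m3 : R) :
  dotv A1 A1 < s ^+ 2 -> dotv A2 A2 < s ^+ 2 -> dotv A3 A3 < s ^+ 2 ->
  m1 * gamma s A1 + m2 * gamma s A2 + m3 * gamma s A3 = 1 ->
  let Q := gyrobary3 s A1 A2 A3 m1 m2 m3 in
  mink Q Q = (m1 + m2 + m3) ^+ 2 +
    2 * (m1 * m2 * (gamma s (eadd s (- A1) A2) - 1) + m1 * m3 * (gamma s (eadd s (- A1) A3) - 1)
         + m2 * m3 * (gamma s (eadd s (- A2) A3) - 1)).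
Proof.
move=> lt1 lt2 lt3 sum_m Q; rewrite /Q gyrobary3_normalized //.
rewrite [mink _ _]mink_combr // !(minkC (_ + _)) !mink_combr //.
rewrite (minkC A2 A1) (minkC A3 A1) (minkC A3 A2) !minkvv_gamma // !gamma_eadd_oppl //.
have := gamma_gt0 lt1; have := gamma_gt0 lt2; have := gamma_gt0 lt3.
by move=> g3_gt0 g2_gt0 g1_gt0; field; rewrite !gt_eqF.
Qed.

Lemma gamma_gyrobary3_center (A1 A2 A3 O : 'rV[R]_n) (m1 m2 m3 : R) :
  dotv A1 A1 < s ^+ 2 -> dotv A2 A2 < s ^+ 2 -> dotv A3 A3 < s ^+ 2 -> dotv O O < s ^+ 2 ->
  m1 * gamma s A1 + m2 * gamma s A2 + m3 * gamma s A3 = 1 ->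
  let Q := gyrobary3 s A1 A2 A3 m1 m2 m3 in dotv Q Q < s ^+ 2 ->
  gyrodist s O A1 = gyrodist s O A3 -> gyrodist s O A2 = gyrodist s O A3 ->
  gyrodist s O Q = gyrodist s O A3 ->
  gamma s Q * (m1 + m2 + m3) = 1.
Proof.
move=> lt1 lt2 lt3 ltO sum_m Q ltQ d1 d2 dQ.
have k1 := gamma_mink_center ltO lt1 lt3 d1.
have k2 := gamma_mink_center ltO lt2 lt3 d2.
have := gamma_mink_center ltO ltQ lt3 dQ.
rewrite {2}/Q gyrobary3_normalized // (minkC _ O) mink_combr // !(minkC O).
have := gamma_gt0 lt1; have := gamma_gt0 lt2; have := mink_gt0 lt3 ltO; have := gamma_gt0 lt3.
move: k1 k2; set g1 := gamma s A1; set g2 := gamma s A2; set g3 := gamma s A3.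
set o1 := mink A1 O; set o2 := mink A2 O; set o3 := mink A3 O.
move=> k1 k2 g3_gt0 o3_gt0 g2_gt0 g1_gt0 kQ.
have k_neq0 : g3 * o3 != 0 by rewrite mulf_neq0 ?gt_eqF.
apply: (mulIf k_neq0); rewrite mul1r -{2}kQ.
have -> : o1 = g3 * o3 / g1 by rewrite -k1 mulrC mulKf ?gt_eqF.
have -> : o2 = g3 * o3 / g2 by rewrite -k2 mulrC mulKf ?gt_eqF.
by field; rewrite !gt_eqF.
Qed.

Lemma circumgyrocircle_gyrobary3 (A1 A2 A3 O : 'rV[R]_n) (m1 m2 m3 : R) :
  dotv A1 A1 < s ^+ 2 -> dotv A2 A2 < s ^+ 2 -> dotv A3 A3 < s ^+ 2 -> dotv O O < s ^+ 2 ->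
  m1 * gamma s A1 + m2 * gamma s A2 + m3 * gamma s A3 != 0 ->
  let Q := gyrobary3 s A1 A2 A3 m1 m2 m3 in dotv Q Q < s ^+ 2 ->
  gyrodist s O A1 = gyrodist s O A3 -> gyrodist s O A2 = gyrodist s O A3 ->
  gyrodist s O Q = gyrodist s O A3 ->
  m1 * m2 * (gamma s (eadd s (- A1) A2) - 1) + m1 * m3 * (gamma s (eadd s (- A1) A3) - 1)
    + m2 * m3 * (gamma s (eadd s (- A2) A3) - 1) = 0.
Proof.
move=> lt1 lt2 lt3 ltO; set M := _ + _ + _ => M_neq0 Q ltQ d1 d2 dQ.
have k_neq0 : M^-1 != 0 by rewrite invr_eq0.
have sum_m : M^-1 * m1 * gamma s A1 + M^-1 * m2 * gamma s A2 + M^-1 * m3 * gamma s A3 = 1.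
  by rewrite -!mulrA -!mulrDr mulVf.
rewrite /Q -(gyrobary3Z _ _ _ _ _ _ k_neq0) in ltQ dQ.
have gM := gamma_gyrobary3_center lt1 lt2 lt3 ltO sum_m ltQ d1 d2 dQ.
have := gamma_sqr ltQ; rewrite minkvv_gyrobary3 // mulrDr -exprMn gM expr1n.
set S := _ + _ + _ => /(canRL (addKr 1)); rewrite addNr => /eqP.
rewrite mulf_eq0 expf_eq0 (gt_eqF (gamma_gt0 ltQ)) andbF mulf_eq0 pnatr_eq0 /= => /eqP S0.
have -> : m1 * m2 * (gamma s (eadd s (- A1) A2) - 1) + m1 * m3 * (gamma s (eadd s (- A1) A3) - 1)
    + m2 * m3 * (gamma s (eadd s (- A2) A3) - 1) = M ^+ 2 * S by rewrite /S; field.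
by rewrite S0 mulr0.
Qed.

Lemma gyroray_gyrobary3 (A1 A2 A3 : 'rV[R]_n) (p1 p2 l : R) :
  dotv A3 A3 < s ^+ 2 -> p1 * gamma s A1 + p2 * gamma s A2 != 0 ->
  A3 + l *: (gyrobary3 s A1 A2 A3 p1 p2 0 - A3) =
  gyrobary3 s A1 A2 A3 (l * p1) (l * p2)
    ((1 - l) * (p1 * gamma s A1 + p2 * gamma s A2) / gamma s A3).
Proof.
move=> lt3 W_neq0; have g3_neq0 : gamma s A3 != 0 by rewrite gt_eqF ?gamma_gt0.
rewrite /gyrobary3 mul0r addr0 scale0r addr0 mulfVK //.
have -> : l * p1 * gamma s A1 + l * p2 * gamma s A2
            + (1 - l) * (p1 * gamma s A1 + p2 * gamma s A2)
          = p1 * gamma s A1 + p2 * gamma s A2 by ring.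
by apply/rowP => i; rewrite !mxE; field.
Qed.

Lemma eadd_oppv u : dotv u u < s ^+ 2 -> eadd s (- u) u = 0.
Proof.
move=> ltu; rewrite eadd_oppl // minkvv_gamma // -scalerDl.
have := gamma_gt0 ltu => g_gt0.
have -> : gamma s u / (1 + gamma s u) * (1 - (gamma s u ^+ 2)^-1) - 1 + (gamma s u)^-1 = 0.
  by field; rewrite !gt_eqF // addr_gt0.
by rewrite !scale0r scaler0.
Qed.

Lemma gamma_gyrodiff_gt1 u v : dotv u u < s ^+ 2 -> dotv v v < s ^+ 2 -> u != v ->
  1 < gamma s (eadd s (- u) v).
Proof.
move=> ltu ltv neq_uv; rewrite gamma_eadd_oppl // lt_neqAle gamma_mink_ge1 // andbT.
by apply: contra neq_uv => /eqP /esym /(gamma_mink_eq1 ltu ltv) ->.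
Qed.

Lemma gyrotriangle_gamma_gt1 (A1 A2 A3 : 'rV[R]_n) : gyrotriangle s A1 A2 A3 ->
  1 < gamma s (eadd s (- A1) A3) /\ 1 < gamma s (eadd s (- A2) A3).
Proof.
move=> [/ball_dotvv lt1 /ball_dotvv lt2 /ball_dotvv lt3 indep].
split; apply: gamma_gyrodiff_gt1 => //; apply/eqP => eqA.
  have := indep 0 1; rewrite eqA eadd_oppv // scale0r scaler0 addr0.
  by case/(_ erefl) => _ /eqP; rewrite oner_eq0.
have := indep 1 (-1); rewrite eqA scaleN1r scale1r subrr.
by case/(_ erefl) => /eqP; rewrite oner_eq0.
Qed.

End Einstein.

Theorem mainTheorem17 (R : rcfType) (n : nat) (s : R)
  (A1 A2 A3 O : 'rV[R]_n) (R0 t1 : R) (Q : 'rV[R]_n) :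
  (2 <= n)%N -> 0 < s ->
  gyrotriangle s A1 A2 A3 ->
  circumcenter s A1 A2 A3 O R0 ->
  0 <= t1 <= 1 ->
  let P := gyrobary3 s A1 A2 A3 (1 - t1) t1 0 in
  on_gyroray s A3 P Q ->
  on_circumgyrocircle s A1 A2 A3 O R0 Q ->
  Q <> A3 ->
  let g12 := gamma s (eadd s (- A1) A2) in
  let g13 := gamma s (eadd s (- A1) A3) in
  let g23 := gamma s (eadd s (- A2) A3) in
  Q = gyrobary3 s A1 A2 A3
        ((g13 - 1 + (g23 - g13) * t1) * (1 - t1))
        ((g13 - 1 + (g23 - g13) * t1) * t1)
        (- ((g12 - 1) * (1 - t1) * t1)).
Proof.
move=> _ s_gt0 tri [[inO _] d1 d2 d3] t01 P [inQ [l [_ onQ]]] [_ dQ] neqQ g12 g13 g23.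
have [g13_gt1 g23_gt1] := gyrotriangle_gamma_gt1 s_gt0 tri.
case: tri => /ball_dotvv lt1 /ball_dotvv lt2 /ball_dotvv lt3 _.
have ltO := ball_dotvv inO; have ltQ := ball_dotvv inQ.
have W_gt0 : 0 < (1 - t1) * gamma s A1 + t1 * gamma s A2.
  by rewrite convex_comb_gt0 ?gamma_gt0.
have l_neq0 : l != 0 by apply: contra_notN neqQ => /eqP l0; rewrite onQ l0 scale0r addr0.
set c := g13 - 1 + (g23 - g13) * t1.
have c_gt0 : 0 < c.
  have -> : c = (1 - t1) * (g13 - 1) + t1 * (g23 - 1) by rewrite /c; ring.
  by rewrite convex_comb_gt0 // subr_gt0.
rewrite onQ /P gyroray_gyrobary3 ?gt_eqF // in ltQ dQ *.
set b := (1 - l) * _ / _ in ltQ dQ *.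
rewrite -d3 in d1 d2 dQ.
have sum_neq0 : l * (1 - t1) * gamma s A1 + l * t1 * gamma s A2 + b * gamma s A3 != 0.
  rewrite /b mulfVK ?gt_eqF ?gamma_gt0 //.
  by rewrite -!mulrA -mulrDr -mulrDl subrKC mul1r.
have := circumgyrocircle_gyrobary3 s_gt0 lt1 lt2 lt3 ltO sum_neq0 ltQ d1 d2 dQ.
move/(cevian_circle_coef l_neq0) => bc.
have lc_neq0 : l / c != 0 by rewrite mulf_neq0 // invr_eq0 gt_eqF.
rewrite -[RHS](gyrobary3Z s A1 A2 A3 _ _ _ lc_neq0) !mulrA !mulfVK ?gt_eqF //.
by rewrite mulrAC -bc mulfK ?gt_eqF.
Qed.
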